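(* Let $\alpha=(\alpha_0,\dots,\alpha_{m-1})\in\mathbb{N}^m$ with $\alpha_0>0$ and $\alpha_{m-1}>0$, and let $r=|\alpha|=\alpha_0+\cdots+\alpha_{m-1}$. Then the minimum polynomial $\mathrm{mmp}(\alpha)$ of the matrix $A_\alpha$ has the form $$\mathrm{mmp}(\alpha)=x^{w_\alpha}(x-1)^{z_\alpha}\,\mathrm{mmp}((r))$$ for some $w_\alpha,z_\alpha\in\mathbb{N}$, where $\mathrm{mmp}((r))$ is the minimum polynomial of $A_{(r)}$ for the length-one sequence $(r)$.
   Context: $\mathbb{N}=\{0,1,2,\dots\}$. Stern's triangle is the array of integers $a(n,k)$, $n\geq 0$, $k\in\mathbb{Z}$, with $a(0,0)=1$, $a(0,k)=0$ for $k\neq 0$, and for all $n\geq 0$ and all $k\in\mathbb{Z}$: $a(n+1,2k+1)=a(n,k)$ and $a(n+1,2k)=a(n,k-1)+a(n,k)$. (Thus row $n$ has nonzero entries exactly at $0\leq k\leq 2^{n+1}-2$, and $\sum_k a(n,k)x^k=\prod_{i=0}^{n-1}(1+x^{2^i}+x^{2\cdot 2^i})$.) For a finite sequence $\gamma=(\gamma_0,\dots,\gamma_{\ell-1})$ of nonnegative integers define $u_\gamma(n)=\sum_{k\in\mathbb{Z}}\prod_{j=0}^{\ell-1}a(n,k+j)^{\gamma_j}$. This is unchanged by deleting leading or trailing zeros of $\gamma$ and (by the left-right symmetry $a(n,k)=a(n,2^{n+1}-2-k)$) by reversing $\gamma$; call two sequences equivalent if they agree after deleting leading and trailing zeros up to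 reversal, and write $[\gamma]$ for the class. Construction of $A_\alpha$: for a sequence $\beta$, write $u_\beta(n+1)=\sum_k\prod_j a(n+1,k+j)^{\beta_j}$, split the sum over $k$ according to the parity of $k$, substitute $a(n+1,2k'+1)=a(n,k')$ and $a(n+1,2k')=a(n,k'-1)+a(n,k')$, and expand each product into monomials in the $a(n,\cdot)$; each resulting sum $\sum_{k'}\prod_i a(n,k'+i)^{\gamma_i}$ equals $u_\gamma(n)$. Collecting terms by equivalence class gives a formal identity $u_\beta(n+1)=\sum_{[\gamma]}c_{[\beta],[\gamma]}\,u_\gamma(n)$ with nonnegative integer coefficients $c_{[\beta],[\gamma]}$ (all $\gamma$ occurring satisfy $|\gamma|=|\beta|$). Call $[\gamma]$ a child of $[\beta]$ if $c_{[\beta],[\gamma]}\neq 0$. Let $D(\alpha)$ be the set of classes reachable from $[\alpha]$ by zero or more child steps; this set is finite. $A_\alpha$ is the square matrix $(c_{[\beta],[\gamma]})_{[\beta],[\gamma]\in D(\alpha)}$, so that the vector $(u_\beta(n))_{[\beta]\in D(\alpha)}$ at $n+1$ equals $A_\alpha$ times the vector at $n$. For example $A_{(2)}=\begin{pmatrix}3&2\\2&2\end{pmatrix}$ with respect to the classes $[(2)],[(1,1)]$. $\mathrm{mmp}(\alpha)$ denotes the monic polynomial of least degree annihilating $A_\alpha$ (independent of the ordering of $D(\alpha)$). *)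

From HB Require Import structures.
From mathcomp Require Import all_boot all_order all_algebra.
Set Implicit Arguments. Unset Strict Implicit. Unset Printing Implicit Defensive.
Import GRing.Theory.

Definition strip_lead (s : seq nat) : seq nat := drop (find (fun x => x != 0) s) s.
Definition strip (s : seq nat) : seq nat := rev (strip_lead (rev (strip_lead s))).

Fixpoint lexle (s t : seq nat) : bool :=
  match s, t with
  | [::], _ => true
  | _ :: _, [::] => false
  | x :: s', y :: t' => (x < y) || ((x == y) && lexle s' t')
  end.

(* canonical representative of the class [s]: strip zeros, then take the
   lexicographically smaller of the result and its reversal.
   Two sequences are equivalent iff they have the same canon. *)
Definition canon (s : seq nat) : seq nat :=
  let t := strip s in if lexle t (rev t) then t else rev t.

(* A monomial in the variables a(n,k'+t), t = -1,0,1,..., is encoded by its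
   exponent vector e, where e`_i is the exponent of a(n,k'+i-1).
   A term is (coefficient, exponent vector). *)
Definition term := (nat * seq nat)%type.

Fixpoint addv (s t : seq nat) : seq nat :=
  match s, t with
  | [::], _ => t
  | _, [::] => s
  | x :: s', y :: t' => (x + y) :: addv s' t'
  end.

Definition mono (p c : nat) : seq nat := rcons (nseq p 0) c.

(* a factor a(n+1, .) after substitution: one variable x_p,
   or a sum of two variables x_p + x_q *)
Inductive factor := One of nat | Two of nat & nat.

Definition expand (f : factor) (b : nat) : seq term :=
  match f with
  | One p => [:: (1, mono p b)]
  | Two p q => [seq ('C(b, c), addv (mono p c) (mono q (b - c))) | c <- iota 0 b.+1]
  end.

Definition mulp (P Q : seq term) : seq term :=
  [seq (x.1 * y.1, addv x.2 y.2) | x <- P, y <- Q].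

Definition prodp (Ps : seq (seq term)) : seq term :=
  foldr mulp [:: (1, [::])] Ps.

(* k = 2k' (even k): position 2k'+j.
   j = 2i   : a(n+1,2(k'+i))   = a(n,k'+i-1) + a(n,k'+i)  -> Two i (i+1)
   j = 2i+1 : a(n+1,2(k'+i)+1) = a(n,k'+i)                -> One (i+1) *)
Definition fac_even (j : nat) : factor :=
  if odd j then One (j./2).+1 else Two j./2 (j./2).+1.

(* k = 2k'+1 (odd k): position 2k'+1+j.
   j = 2i   : a(n+1,2(k'+i)+1) = a(n,k'+i)                -> One (i+1)
   j = 2i+1 : a(n+1,2(k'+i+1)) = a(n,k'+i) + a(n,k'+i+1)  -> Two (i+1) (i+2) *)
Definition fac_odd (j : nat) : factor :=
  if odd j then Two (j./2).+1 (j./2).+2 else One (j./2).+1.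

Definition terms_of (fac : nat -> factor) (beta : seq nat) : seq term :=
  prodp [seq expand (fac j) (nth 0 beta j) | j <- iota 0 (size beta)].

(* all monomials of the expansion of u_beta(n+1), with multiplicity *)
Definition all_terms (beta : seq nat) : seq term :=
  terms_of fac_even beta ++ terms_of fac_odd beta.

Definition coef (beta gamma : seq nat) : nat :=
  sumn [seq t.1 | t <- all_terms beta & canon t.2 == canon gamma].

Definition children (beta : seq nat) : seq (seq nat) :=
  undup [seq canon t.2 | t <- all_terms beta & coef beta (canon t.2) != 0].

Definition closure_step (L : seq (seq nat)) : seq (seq nat) :=
  undup (L ++ flatten (map children L)).

(* Every class reachable from [alpha] has a canonical representative of
   weight |alpha| and length <= max(size alpha, 3); there are at most
   (|alpha|+1)^(max(size alpha,3)) such representatives, so this many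
   closure steps reach the fixpoint, i.e. the whole set D(alpha). *)
Definition fuel (alpha : seq nat) : nat := (sumn alpha).+1 ^ (maxn (size alpha) 3).

Definition Dlist (alpha : seq nat) : seq (seq nat) :=
  iter (fuel alpha) closure_step [:: canon alpha].

Definition dimD (alpha : seq nat) : nat := (size (Dlist alpha)).-1.

Definition Amx (alpha : seq nat) : 'M[rat]_((dimD alpha).+1) :=
  \matrix_(i, j) (coef (nth [::] (Dlist alpha) i) (nth [::] (Dlist alpha) j))%:R%R.

Definition mmp (alpha : seq nat) : {poly rat} := mxminpoly (Amx alpha).

From Pilot Require Import Defs.
From HB Require Import structures.
From mathcomp Require Import all_boot all_order all_algebra.
From mathcomp Require Import zify.
Import GRing.Theory.

(* Let r = |alpha|. The classes of length at most two in D(alpha) are exactly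
   D((r)): such a class of weight r is (r) or a child (x, r - x) of (r), (r) is a
   child of each of them, and (r) is reached from [alpha] by repeatedly expanding
   at odd k, which roughly halves the length. Children of short classes are short,
   so after reordering A_alpha = [A_(r) 0; C T]. T is triangular for [height]:
   the children of a class of length >= 4 are shorter, and a child of (a, b, c)
   other than itself is shorter or has a larger middle entry. The diagonal of T is
   0 (length >= 4) or 1 (length 3, where only the term C(a,a) C(c,0) contributes).
   Hence mmp((r)) divides mmp(alpha), which divides (x (x - 1))^k mmp((r)). *)

(* vector.v also defines [addv], for sums of subspaces. *)
Local Notation addv := Defs.addv.

Section ZeroOneRoots.
Local Open Scope ring_scope.

Lemma prod_XsubC_01 {F : fieldType} (s : seq F) :
  all (fun x => (x == 0) || (x == 1)) s ->
  \prod_(x <- s) ('X - x%:P) = 'X^(count_mem 0 s) * ('X - 1) ^+ (count_mem 1 s).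
Proof.
elim: s => [|x s IHs] /=; first by rewrite big_nil expr0 mulr1.
case/andP=> /orP[] /eqP-> /IHs{}IHs; rewrite big_cons IHs /=.
  by rewrite subr0 eqxx eq_sym oner_eq0 add1n add0n exprS mulrA.
by rewrite eqxx oner_eq0 add1n add0n exprS mulrCA mulrA.
Qed.

Lemma monic_dvdp_exp_X_Xsub1 {F : fieldType} {g : {poly F}} {k} : g \is monic ->
  g %| ('X * ('X - 1)) ^+ k -> exists w z : nat, g = 'X^w * ('X - 1) ^+ z.
Proof.
move=> g_monic; set s := nseq k (0 : F) ++ nseq k 1.
have s01 : all (fun x => (x == 0) || (x == 1)) s.
  by rewrite all_cat !all_nseq !eqxx !orbT.
have -> : ('X * ('X - 1)) ^+ k = \prod_(x <- s) ('X - x%:P).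
  rewrite prod_XsubC_01 // !count_cat !count_nseq /= !eqxx [0 == 1]eq_sym.
  by rewrite oner_eq0 mul1n mul0n addn0 add0n exprMn.
case/dvdp_prod_XsubC=> msk; rewrite prod_XsubC_01; last first.
  by apply/allP=> x /mem_mask x_s; move/allP: s01; apply.
rewrite eqp_monic // ?monicMl ?monicXn ?monic_exp ?monicXsubC //.
by move/eqP->; do 2 eexists.
Qed.

End ZeroOneRoots.

(* Listing the indices in [S] first, A = [B 0; C T] with T triangular for [rank]
   and with 0/1 diagonal. *)
Section MinpolyOfExtension.
Local Open Scope ring_scope.
Variables (F : fieldType) (n m : nat) (A : 'M[F]_n.+1) (B : 'M[F]_m.+1).
Variables (emb : 'I_m.+1 -> 'I_n.+1) (S : pred 'I_n.+1) (rank : 'I_n.+1 -> nat).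
Hypothesis emb_inj : injective emb.
Hypothesis S_emb : forall i, S (emb i).
Hypothesis emb_onto : forall {j}, S j -> exists i, emb i = j.
Hypothesis A_emb : forall i j, A (emb i) (emb j) = B i j.
Hypothesis A_stable : forall {i j}, S i -> A i j != 0 -> S j.
Hypothesis A_lower :
  forall {i j}, ~~ S i -> ~~ S j -> A i j != 0 -> (rank j < rank i)%N \/ j = i.
Hypothesis A_diag01 : forall {i}, ~~ S i -> A i i = 0 \/ A i i = 1.

Lemma big_S_emb (G : 'I_n.+1 -> F) : \sum_(l | S l) G l = \sum_k G (emb k).
Proof.
rewrite -[RHS](big_imset _ (in2W emb_inj)) /=.
apply: eq_bigl => l; apply/idP/imsetP => [/emb_onto[i <-]|[i _ ->]].
  by exists i.
exact: S_emb.
Qed.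

Definition stable (P : 'M[F]_n.+1) := forall i j, S i -> ~~ S j -> P i j = 0.

Definition restricts_to (P : 'M[F]_n.+1) (Q : 'M[F]_m.+1) :=
  forall i j, P (emb i) (emb j) = Q i j.

Lemma stable_mulmx {P} : stable P -> stable (P *m A).
Proof.
move=> P_stable i j Si nSj; rewrite mxE big1 // => l _.
have [Sl|nSl] := boolP (S l); last by rewrite P_stable ?mul0r.
have [->|Alj] := eqVneq (A l j) 0; first by rewrite mulr0.
by rewrite (A_stable Sl Alj) in nSj.
Qed.

Lemma restricts_to_mulmx {P Q} :
  stable P -> restricts_to P Q -> restricts_to (P *m A) (Q *m B).
Proof.
move=> P_stable PQ i j; rewrite !mxE (bigID S) /= [X in _ + X]big1 ?addr0.
  by rewrite big_S_emb; apply: eq_bigr => k _; rewrite PQ A_emb.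
by move=> l nSl; rewrite P_stable ?mul0r.
Qed.

Lemma horner_mx_stable_restricts p :
  stable (horner_mx A p) /\ restricts_to (horner_mx A p) (horner_mx B p).
Proof.
elim/poly_ind: p => [|p c [IHst IHres]].
  by rewrite !rmorph0; split=> i j; rewrite ?mxE.
rewrite !rmorphD !rmorphM /= !horner_mx_X !horner_mx_C -!mulmxE; split.
  move=> i j Si nSj; rewrite mxE (stable_mulmx IHst _ _ Si nSj) add0r mxE.
  by case: eqP => [eij|]; rewrite ?mulr0n //; rewrite -eij Si in nSj.
move=> i j; rewrite mxE (restricts_to_mulmx IHst IHres) [in RHS]mxE.
by rewrite !mxE (inj_eq emb_inj).
Qed.

Lemma mxminpoly_restr_dvdp : mxminpoly B %| mxminpoly A.
Proof.
apply: mxminpoly_min; apply/matrixP => i j.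
by rewrite -(horner_mx_stable_restricts _).2 mx_root_minpoly !mxE.
Qed.

Definition vanishes_below k (Y : 'M[F]_n.+1) :=
  forall i j, S i || (rank i < k)%N -> Y i j = 0.

Lemma vanishes_below_mulmx {k Y} :
  vanishes_below k Y -> vanishes_below k (A *m Y).
Proof.
move=> Y0 i j Sik; rewrite mxE big1 // => l _.
have [->|Ail] := eqVneq (A i l) 0; first by rewrite mul0r.
rewrite Y0 ?mulr0 //; case: (boolP (S i)) Sik => [Si _|nSi /= ltik].
  by rewrite (A_stable Si Ail).
have [//|nSl] := boolP (S l).
by case: (A_lower nSi nSl Ail) => [/ltn_trans->|->].
Qed.

Lemma mulmx_vanishes_belowE {k Y} : vanishes_below k Y ->
  forall i j, ~~ S i -> rank i = k -> (A *m Y) i j = A i i * Y i j.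
Proof.
move=> Y0 i j nSi rank_i; rewrite mxE (bigD1 i) //= big1 ?addr0 // => l l_i.
have [->|Ail] := eqVneq (A i l) 0; first by rewrite mul0r.
have [Sl|nSl] := boolP (S l); first by rewrite Y0 ?Sl ?mulr0.
case: (A_lower nSi nSl Ail) => [lt_li|eli]; last by rewrite eli eqxx in l_i.
by rewrite Y0 ?mulr0 // -rank_i lt_li orbT.
Qed.

Lemma vanishes_below_step {k Y} :
  vanishes_below k Y -> vanishes_below k.+1 (A *m (A *m Y - Y)).
Proof.
move=> Y0; have AY0 := vanishes_below_mulmx Y0.
have W0 : vanishes_below k (A *m Y - Y).
  by move=> i j Sik; move: (AY0 i j Sik); rewrite !mxE => ->; rewrite Y0 // subr0.
move=> i j; rewrite ltnS leq_eqVlt orbCA => /orP[/eqP rank_i|]; last first.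
  exact: vanishes_below_mulmx.
have [Si|nSi] := boolP (S i); first by rewrite (vanishes_below_mulmx W0) ?Si.
rewrite (mulmx_vanishes_belowE W0) // mxE [(- Y) i j]mxE.
rewrite (mulmx_vanishes_belowE Y0) //.
by case: (A_diag01 nSi) => ->; rewrite ?mul0r // !mul1r subrr.
Qed.

Lemma vanishes_below_horner k :
  vanishes_below k (horner_mx A (('X * ('X - 1)) ^+ k * mxminpoly B)).
Proof.
elim: k => [|k IHk].
  rewrite expr0 mul1r => i j; rewrite orbF => Si.
  have [st res] := horner_mx_stable_restricts (mxminpoly B).
  have [Sj|nSj] := boolP (S j); last exact: st.
  have [[i' <-] [j' <-]] := (emb_onto Si, emb_onto Sj).
  by rewrite res mx_root_minpoly mxE.
rewrite exprS -mulrA rmorphM /= rmorphM rmorphB /= horner_mx_X rmorph1.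
rewrite -mulrA mulrBl mul1r.
exact: vanishes_below_step.
Qed.

Lemma mxminpoly_dvdp_ext :
  mxminpoly A %| ('X * ('X - 1)) ^+ (\max_i rank i).+1 * mxminpoly B.
Proof.
apply: mxminpoly_min; apply/matrixP => i j; rewrite [RHS]mxE.
by apply: vanishes_below_horner; rewrite ltnS leq_bigmax orbT.
Qed.

Lemma mxminpoly_ext :
  exists w z : nat, mxminpoly A = 'X^w * ('X - 1) ^+ z * mxminpoly B.
Proof.
have [g defA] := dvdpP _ _ mxminpoly_restr_dvdp.
have B0 : mxminpoly B != 0 by rewrite monic_neq0 ?mxminpoly_monic.
have g_monic : g \is monic.
  by have := mxminpoly_monic A; rewrite defA monicMr ?mxminpoly_monic.
have := mxminpoly_dvdp_ext; rewrite {1}defA dvdp_mul2r //.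
by case/(monic_dvdp_exp_X_Xsub1 g_monic)=> w [z g_eq]; exists w, z; rewrite defA g_eq.
Qed.

End MinpolyOfExtension.

Lemma nth_addv s t i : nth 0 (addv s t) i = nth 0 s i + nth 0 t i.
Proof. by elim: s t i => [|x s IHs] [|y t] [|i] //=; rewrite ?nth_nil ?addn0. Qed.

Lemma nth_mono p c i : nth 0 (mono p c) i = if i == p then c else 0.
Proof.
rewrite /mono nth_rcons size_nseq; case: ltngtP => // lt_ip.
by rewrite nth_nseq lt_ip.
Qed.

Lemma sumn_addv s t : sumn (addv s t) = sumn s + sumn t.
Proof. by elim: s t => [|x s IHs] [|y t] //=; rewrite ?addn0 // IHs addnACA. Qed.

Lemma sumn_mono p c : sumn (mono p c) = c.
Proof. by rewrite /mono sumn_rcons sumn_nseq. Qed.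

Lemma mem_leq_sumn x s : x \in s -> x <= sumn s.
Proof. by elim: s => [|y s IHs] //=; rewrite inE => /predU1P[->|/IHs]; lia. Qed.

Lemma leq_find (a : pred nat) s m :
  m <= size s -> (forall i, i < m -> ~~ a (nth 0 s i)) -> m <= find a s.
Proof.
move=> le_ms not_a; rewrite leqNgt; apply/negP => lt_find.
have has_a : has a s by rewrite has_find (leq_trans lt_find).
by have := not_a _ lt_find; rewrite (nth_find 0 has_a).
Qed.

Definition stripped (w : seq nat) :=
  (w == [::]) || ((nth 0 w 0 != 0) && (nth 0 w (size w).-1 != 0)).

Lemma strip_lead_id s : nth 0 s 0 != 0 -> strip_lead s = s.
Proof. by case: s => [|x s] //= x0; rewrite /strip_lead /= x0. Qed.

Lemma strip_leadP s : strip_lead s = [::] \/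
  exists2 k, k < size s & strip_lead s = drop k s /\ nth 0 s k != 0.
Proof.
rewrite /strip_lead; have [has_nz|no_nz] := boolP (has (fun x => x != 0) s).
  right; exists (find (fun x => x != 0) s); first by rewrite -has_find.
  by split=> //; apply: (nth_find 0 has_nz).
by left; rewrite (hasNfind no_nz) drop_size.
Qed.

Lemma sumn_strip_lead s : sumn (strip_lead s) = sumn s.
Proof. by rewrite /strip_lead; elim: s => [|[|x] s IHs]. Qed.

Lemma sumn_strip s : sumn (strip s) = sumn s.
Proof. by rewrite /strip sumn_rev sumn_strip_lead sumn_rev sumn_strip_lead. Qed.

Lemma strip_id w : stripped w -> strip w = w.
Proof.
case: w => [|x w] // /andP[x0 last0].
by rewrite /strip strip_lead_id // strip_lead_id ?revK // nth_rev //= subn1.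
Qed.

Lemma stripped_rev w : stripped (rev w) = stripped w.
Proof.
case: w => [|x w] //; rewrite /stripped size_rev -size_eq0 size_rev /=.
by rewrite !nth_rev //= ?subn1 ?subnn // andbC.
Qed.

Lemma stripped_strip s : stripped (strip s).
Proof.
rewrite /strip stripped_rev.
case: (strip_leadP s) => [->|[k lt_ks [-> sk0]]] //.
set w := drop k s.
case: (strip_leadP (rev w)) => [->|[k' lt_k' [-> wk0]]] //.
rewrite size_rev in lt_k'.
rewrite /stripped nth_drop addn0 wk0 size_drop size_rev nth_drop nth_rev; last lia.
by rewrite (_ : _ - _ = 0) ?nth_drop ?addn0 ?orbT //; lia.
Qed.

Lemma stripped_canon s : stripped (canon s).
Proof.
rewrite /canon /=; case: ifP => _; first exact: stripped_strip.
by rewrite stripped_rev stripped_strip.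
Qed.

Lemma strip_canon s : strip (canon s) = canon s.
Proof. exact/strip_id/stripped_canon. Qed.

Lemma lexle_total s t : lexle s t || lexle t s.
Proof.
elim: s t => [|x s IHs] [|y t] //=.
by case: ltngtP => //= ->; rewrite eqxx.
Qed.

Lemma canon_idem s : canon (canon s) = canon s.
Proof.
rewrite {1}/canon strip_canon /canon /=; set t := strip s.
case lex_t: (lexle t (rev t)); first by rewrite lex_t.
by rewrite revK; have := lexle_total t (rev t); rewrite lex_t /= => ->.
Qed.

Lemma sumn_canon s : sumn (canon s) = sumn s.
Proof.
rewrite /canon /=; case: ifP => _; first exact: sumn_strip.
by rewrite [sumn (rev _)]sumn_rev sumn_strip.
Qed.

Lemma size_canon s : size (canon s) = size (strip s).
Proof. by rewrite /canon /=; case: ifP; rewrite ?[size (rev (strip s))]size_rev. Qed.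

Lemma size_strip_support v lo hi :
  (forall i, nth 0 v i != 0 -> lo <= i <= hi) -> size (strip v) <= hi.+1 - lo.
Proof.
move=> supp; rewrite /strip size_rev.
case: (strip_leadP v) => [->|[k lt_kv [-> vk0]]] //.
have /andP[le_lo_k le_k_hi] := supp _ vk0.
rewrite /strip_lead size_drop size_rev size_drop.
set m := size v - k - (hi.+1 - k).
have : m <= find (fun x => x != 0) (rev (drop k v)).
  apply: leq_find => [|i lt_im]; first by rewrite size_rev size_drop /m; lia.
  rewrite nth_rev ?size_drop /m; last lia.
  rewrite nth_drop negbK; apply/negPn/negP => /supp; rewrite /m in lt_im; lia.
rewrite /m; lia.
Qed.

Definition factor_var (f : factor) (i : nat) :=
  match f with One p => i == p | Two p q => (i == p) || (i == q) end.

Lemma mem_expand {f b x} : x \in expand f b ->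
  [/\ 0 < x.1, sumn x.2 = b & forall i, nth 0 x.2 i != 0 -> factor_var f i].
Proof.
case: f => [p|p q]; rewrite /expand.
  rewrite inE => /eqP-> /=; split=> [//||i]; first exact: sumn_mono.
  by rewrite nth_mono; case: ifP => // ->.
case/mapP=> c; rewrite mem_iota ltnS => /andP[_ le_cb] -> /=.
split; first by rewrite bin_gt0.
  by rewrite sumn_addv !sumn_mono subnKC.
by move=> i /=; rewrite nth_addv !nth_mono; case: (i == p); case: (i == q).
Qed.

Lemma mem_mulp {t P Q} : t \in mulp P Q ->
  exists x y, [/\ x \in P, y \in Q & t = (x.1 * y.1, addv x.2 y.2)].
Proof. by case/allpairsP=> -[x y] [/= Px Qy ->]; exists x, y. Qed.

Lemma mulp_f {x y P Q} :
  x \in P -> y \in Q -> (x.1 * y.1, addv x.2 y.2) \in mulp P Q.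
Proof. exact: (allpairs_f (fun x y : term => (x.1 * y.1, addv x.2 y.2))). Qed.

Lemma mem_prodp fac beta js t :
  t \in prodp [seq expand (fac j) (nth 0 beta j) | j <- js] ->
  [/\ 0 < t.1, sumn t.2 = sumn [seq nth 0 beta j | j <- js] &
      forall i, nth 0 t.2 i != 0 -> exists2 j, j \in js & factor_var (fac j) i].
Proof.
elim: js t => [|j js IHjs] t /=.
  by rewrite inE => /eqP-> /=; split=> // i; rewrite nth_nil.
case/mem_mulp=> x [y [Px Py ->]] /=.
have [x1_gt0 sum_x supp_x] := mem_expand Px.
have [y1_gt0 sum_y supp_y] := IHjs _ Py.
split; first by rewrite muln_gt0 x1_gt0.
  by rewrite sumn_addv sum_x sum_y.
move=> i; rewrite nth_addv; have [/supp_x fx _|] := boolP (nth 0 x.2 i != 0).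
  by exists j; rewrite ?mem_head.
rewrite negbK => /eqP-> /supp_y[j' js_j' fj']; exists j' => //.
by rewrite inE js_j' orbT.
Qed.

Lemma mem_terms_of fac beta t : t \in terms_of fac beta ->
  [/\ 0 < t.1, sumn t.2 = sumn beta &
      forall i, nth 0 t.2 i != 0 -> exists2 j, j < size beta & factor_var (fac j) i].
Proof.
case/mem_prodp=> t1_gt0 sum_t supp_t; split=> //.
  by rewrite sum_t -/(mkseq _ _) mkseq_nth.
by move=> i /supp_t[j]; rewrite mem_iota => /andP[_ lt_j]; exists j.
Qed.

Lemma expand_neq_nil f b : expand f b != [::].
Proof. by case: f => [p|p q] //=; rewrite -size_eq0 size_map size_iota. Qed.

Lemma terms_of_neq_nil fac beta : terms_of fac beta != [::].
Proof.
rewrite /terms_of; elim: (iota _ _) => [|j js IHjs] //=.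
move: IHjs (expand_neq_nil (fac j) (nth 0 beta j)).
by case: prodp => // y Q _; case: expand.
Qed.

Lemma size_even_term {beta t} : t \in terms_of fac_even beta ->
  size (strip t.2) <= (size beta).-1./2.+2.
Proof.
case/mem_terms_of=> _ _ supp_t.
have := @size_strip_support t.2 0 (size beta).-1./2.+1.
rewrite subn0; apply=> i /supp_t[j lt_j].
by rewrite /fac_even; case: ifP => odd_j /=; [move/eqP-> | case/orP=> /eqP->]; lia.
Qed.

Lemma size_odd_term {beta t} : t \in terms_of fac_odd beta ->
  size (strip t.2) <= (size beta)./2.+1.
Proof.
case/mem_terms_of=> _ _ supp_t.
have := @size_strip_support t.2 1 (size beta)./2.+1.
rewrite subn1; apply=> i /supp_t[j lt_j].
by rewrite /fac_odd; case: ifP => odd_j /=; [case/orP=> /eqP-> | move/eqP->]; lia.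
Qed.

Lemma mem_all_terms {beta t} : t \in all_terms beta ->
  0 < t.1 /\ sumn t.2 = sumn beta.
Proof. by rewrite mem_cat => /orP[] /mem_terms_of[]. Qed.

Lemma size_child_le2 {beta t} : size beta <= 2 -> t \in all_terms beta ->
  size (canon t.2) <= 2.
Proof.
by rewrite size_canon mem_cat => le_beta /orP[/size_even_term|/size_odd_term]; lia.
Qed.

Lemma size_child_lt {beta t} : 4 <= size beta -> t \in all_terms beta ->
  size (canon t.2) < size beta.
Proof.
by rewrite size_canon mem_cat => le_beta /orP[/size_even_term|/size_odd_term]; lia.
Qed.

Lemma size_odd_child3 {beta t} : size beta = 3 -> t \in terms_of fac_odd beta ->
  size (canon t.2) <= 2.
Proof. by rewrite size_canon => size_beta /size_odd_term; rewrite size_beta. Qed.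

Lemma leq_term_coef beta gamma t : t \in all_terms beta ->
  canon t.2 = canon gamma -> t.1 <= coef beta gamma.
Proof.
by move=> beta_t t_gamma; apply/mem_leq_sumn/map_f; rewrite mem_filter t_gamma eqxx.
Qed.

Lemma coef_neq0 beta gamma : coef beta gamma != 0 ->
  exists2 t, t \in all_terms beta & canon t.2 = canon gamma.
Proof.
rewrite /coef; case def_ts: [seq _ <- _ | _] => [|t ts] // _.
have : t \in [seq t <- all_terms beta | canon t.2 == canon gamma].
  by rewrite def_ts mem_head.
by rewrite mem_filter => /andP[/eqP t_gamma beta_t]; exists t.
Qed.

Lemma canon_term_child {beta t} : t \in all_terms beta -> canon t.2 \in children beta.
Proof.
move=> beta_t; rewrite mem_undup; apply/mapP; exists t => //.
rewrite mem_filter beta_t andbT -lt0n.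
apply: leq_trans (mem_all_terms beta_t).1 _.
by apply: leq_term_coef; rewrite ?canon_idem.
Qed.

Lemma childrenP beta gamma : gamma \in children beta ->
  exists2 t, t \in all_terms beta & gamma = canon t.2.
Proof.
by rewrite mem_undup => /mapP[t]; rewrite mem_filter => /andP[_ beta_t] ->; exists t.
Qed.

Lemma closure_step_sub L : {subset L <= closure_step L}.
Proof. by move=> beta L_beta; rewrite mem_undup mem_cat L_beta. Qed.

Lemma closure_step_child {L beta gamma} :
  beta \in L -> gamma \in children beta -> gamma \in closure_step L.
Proof.
move=> L_beta child; rewrite mem_undup mem_cat; apply/orP; right.
by apply/flattenP; exists (children beta); rewrite ?map_f.
Qed.

Lemma closure_iter_ind (P : seq nat -> Prop) L k :
  (forall beta, beta \in L -> P beta) ->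
  (forall beta gamma, P beta -> gamma \in children beta -> P gamma) ->
  forall beta, beta \in iter k closure_step L -> P beta.
Proof.
move=> P_L P_children; elim: k => [|k IHk] //= beta.
rewrite mem_undup mem_cat => /orP[/IHk //|/flattenP[s /mapP[b L_b ->]]].
exact: P_children (IHk _ L_b).
Qed.

Lemma closure_iter_mono {L k k'} : k <= k' ->
  {subset iter k closure_step L <= iter k' closure_step L}.
Proof.
move=> le_kk'; rewrite -(subnK le_kk'); elim: (k' - k) => [|d IHd] //= beta.
by move/IHd; apply: closure_step_sub.
Qed.

Lemma closure_iter_uniq L k : uniq L -> uniq (iter k closure_step L).
Proof. by case: k => [|k] //= _; apply: undup_uniq. Qed.

Lemma canon_singleton r : r != 0 -> canon [:: r] = [:: r].
Proof. by case: r => // r _; rewrite /canon /strip /strip_lead /= ltnn eqxx. Qed.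

Lemma canon_0r r : r != 0 -> canon [:: 0; r] = [:: r].
Proof. by case: r => // r _; rewrite /canon /strip /strip_lead /= ltnn eqxx. Qed.

Lemma expand_Two_in p q {b c} : c <= b ->
  ('C(b, c), addv (mono p c) (mono q (b - c))) \in expand (Two p q) b.
Proof.
move=> le_cb; apply: (map_f (fun c => ('C(b, c), addv (mono p c) (mono q (b - c))))).
by rewrite mem_iota ltnS.
Qed.

Lemma terms_of_even1 x :
  terms_of fac_even [:: x] = mulp (expand (Two 0 1) x) [:: (1, [::])].
Proof. by []. Qed.

Lemma terms_of_even2 x y : terms_of fac_even [:: x; y] =
  mulp (expand (Two 0 1) x) (mulp (expand (One 1) y) [:: (1, [::])]).
Proof. by []. Qed.

Lemma canon_pair_child x y : canon [:: x; y] \in children [:: x + y].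
Proof.
have /canon_term_child : ('C(x + y, x) * 1,
    addv (addv (mono 0 x) (mono 1 (x + y - x))) [::]) \in all_terms [:: x + y].
  rewrite mem_cat terms_of_even1; apply/orP; left.
  exact: mulp_f (expand_Two_in 0 1 (leq_addr y x)) (mem_head ((1, [::]) : term) [::]).
by rewrite /= addn0 addKn.
Qed.

Lemma singleton_child_small beta : 0 < sumn beta -> size beta <= 2 ->
  [:: sumn beta] \in children beta.
Proof.
(* Take c = 0 in the expansion of a(n+1, 2k')^x: the monomial is [:: 0; sumn beta]. *)
case: beta => [|x [|y [|//]]] // sum_gt0 _.
  have /canon_term_child : ('C(x, 0) * 1,
      addv (addv (mono 0 0) (mono 1 (x - 0))) [::]) \in all_terms [:: x].
    rewrite mem_cat terms_of_even1; apply/orP; left.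
    exact: mulp_f (expand_Two_in 0 1 (leq0n x)) (mem_head ((1, [::]) : term) [::]).
  move: sum_gt0; rewrite /= subn0 add0n addn0 => x_gt0.
  by rewrite canon_0r // -lt0n.
have /canon_term_child : ('C(x, 0) * (1 * 1), addv (addv (mono 0 0) (mono 1 (x - 0)))
    (addv (mono 1 y) [::])) \in all_terms [:: x; y].
  rewrite mem_cat terms_of_even2; apply/orP; left.
  exact: mulp_f (expand_Two_in 0 1 (leq0n x))
    (mulp_f (mem_head ((1, mono 1 y) : term) [::]) (mem_head ((1, [::]) : term) [::])).
move: sum_gt0; rewrite /= subn0 !add0n addn0 => sum_gt0.
by rewrite canon_0r // -lt0n.
Qed.

Lemma small_canon_child_singleton beta : canon beta = beta -> size beta <= 2 ->
  0 < sumn beta -> beta = [:: sumn beta] \/ beta \in children [:: sumn beta].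
Proof.
case: beta => [|x [|y [|//]]] //= canon_beta _ _; first by left; rewrite addn0.
by right; rewrite addn0 -{1}canon_beta canon_pair_child.
Qed.

Lemma singleton_mem_closure_step {L beta} : beta \in L -> 0 < sumn beta ->
  size beta <= 2 -> [:: sumn beta] \in closure_step L.
Proof.
by move=> L_beta sum_gt0 le2; apply/(closure_step_child L_beta)/singleton_child_small.
Qed.

Lemma singleton_reachable {L r} : 0 < r -> forall n {k beta},
  beta \in iter k closure_step L -> sumn beta = r -> size beta <= n.+2 ->
  [:: r] \in iter (k + n.+1) closure_step L.
Proof.
move=> r_gt0; elim=> [|n IHn] k beta L_beta sum_beta size_beta.
  by rewrite addn1 -sum_beta singleton_mem_closure_step ?sum_beta.
have [le_beta2|gt_beta2] := leqP (size beta) 2.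
  apply: (@closure_iter_mono L k.+1); first lia.
  by rewrite -sum_beta singleton_mem_closure_step ?sum_beta.
case def_ts: (terms_of fac_odd beta) (terms_of_neq_nil fac_odd beta) => [//|t ts] _.
have odd_t : t \in terms_of fac_odd beta by rewrite def_ts mem_head.
have beta_t : t \in all_terms beta by rewrite mem_cat odd_t orbT.
rewrite -addSnnS; apply: (IHn k.+1 (canon t.2)).
- exact: closure_step_child L_beta (canon_term_child beta_t).
- by rewrite sumn_canon (mem_all_terms beta_t).2.
- rewrite size_canon; apply: leq_trans (size_odd_term odd_t) _.
  by rewrite ltnS leq_half_double; apply: leq_trans size_beta _; lia.
Qed.

Lemma terms_of_even3 a b c : terms_of fac_even [:: a; b; c] =
  mulp (expand (Two 0 1) a)
    (mulp (expand (One 1) b) (mulp (expand (Two 1 2) c) [:: (1, [::])])).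
Proof. by []. Qed.

Lemma even3_term_vec a b c t : t \in terms_of fac_even [:: a; b; c] ->
  exists c1 e, [/\ c1 <= a, e <= c & t.2 = [:: c1; a - c1 + b + e; c - e]].
Proof.
rewrite terms_of_even3 => /mem_mulp[x [? [/mapP[c1 + ->] + ->]]].
rewrite mem_iota ltnS => /andP[_ le_c1a] /mem_mulp[y [? [+ + ->]]].
rewrite inE => /eqP-> /mem_mulp[z [u [/mapP[e + ->] + ->]]].
rewrite mem_iota ltnS inE => /andP[_ le_ec] /eqP-> /=.
by exists c1, e; split=> //; rewrite /mono /=; congr [:: _; _; _]; lia.
Qed.

Lemma canon3_cases x y z : size (canon [:: x; y; z]) <= 2 \/
  size (canon [:: x; y; z]) = 3 /\ nth 0 (canon [:: x; y; z]) 1 = y.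
Proof.
have [x0|x_neq0] := eqVneq x 0.
  left; rewrite size_canon x0; apply: leq_trans (@size_strip_support _ 1 2 _) _ => //.
  by case=> [|[|[|i]]] //=; rewrite nth_nil.
have [z0|z_neq0] := eqVneq z 0.
  left; rewrite size_canon z0; apply: leq_trans (@size_strip_support _ 0 1 _) _ => //.
  by case=> [|[|[|i]]] //=; rewrite nth_nil.
right; rewrite /canon /= strip_id; last by rewrite /stripped /= x_neq0 z_neq0.
by case: ifP.
Qed.

(* Lexicographic in (size, - middle entry) on classes of weight r. *)
Definition height r beta := r.+1 * size beta + (r - nth 0 beta 1).

Lemma size3P (beta : seq nat) : size beta = 3 -> exists a b c, beta = [:: a; b; c].
Proof. by case: beta => [|a [|b [|c []]]] // _; exists a, b, c. Qed.

Lemma coef_neq0_height {r beta gamma} :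
  canon beta = beta -> canon gamma = gamma -> sumn gamma = r ->
  3 <= size beta -> 3 <= size gamma -> coef beta gamma != 0 ->
  height r gamma < height r beta \/ gamma = beta.
Proof.
move=> canon_beta canon_gamma sum_gamma ge3_beta ge3_gamma /coef_neq0[t beta_t].
rewrite canon_gamma => t_gamma.
have [ge4_beta|lt4_beta] := leqP 4 (size beta).
  have := size_child_lt ge4_beta beta_t; rewrite t_gamma => lt_size; left.
  have : r.+1 * (size gamma).+1 <= r.+1 * size beta by rewrite leq_mul2l lt_size orbT.
  by rewrite /height mulnS; lia.
have /size3P[a [b [c def_beta]]] : size beta = 3 by lia.
move: beta_t; rewrite mem_cat => /orP[even_t|odd_t]; last first.
  by have := size_odd_child3 (_ : size beta = 3) odd_t; rewrite t_gamma; lia.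
move: even_t; rewrite def_beta => /even3_term_vec[c1 [e [le_c1a le_ec t2]]].
rewrite t2 in t_gamma; set m := a - c1 + b + e in t_gamma.
case: (canon3_cases c1 m (c - e)); rewrite t_gamma; [lia | case=> size_gamma mid_gamma].
have : sumn gamma = c1 + m + (c - e) by rewrite -t_gamma sumn_canon /= addn0 addnA.
rewrite sum_gamma => sum_m.
have [lt_mb|gt_mb|eq_mb] := ltngtP m b; first lia.
  by left; rewrite /height size_gamma mid_gamma /=; lia.
have [c1a e0] : c1 = a /\ e = 0 by lia.
by right; rewrite -t_gamma /m c1a e0 subnn add0n addn0 subn0 -def_beta.
Qed.

Lemma coef_sum beta gamma : coef beta gamma =
  \sum_(t <- all_terms beta) (if canon t.2 == canon gamma then t.1 else 0).
Proof. by rewrite /coef sumnE big_map big_filter big_mkcond. Qed.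

Lemma sum_mulp (G : term -> nat) P Q : \sum_(t <- mulp P Q) G t =
  \sum_(x <- P) \sum_(y <- Q) G (x.1 * y.1, addv x.2 y.2).
Proof. exact: big_allpairs_dep. Qed.

Lemma sum_iota_indicator2 a c (G : nat -> nat -> nat) :
  (forall c1 e, c1 <= a -> e <= c -> G c1 e = (c1 == a) && (e == 0)) ->
  \sum_(c1 <- iota 0 a.+1) \sum_(e <- iota 0 c.+1) G c1 e = 1.
Proof.
move=> G01; transitivity (\sum_(c1 <- iota 0 a.+1) (c1 == a : nat)).
  apply: eq_big_seq => c1; rewrite mem_iota ltnS => /andP[_ le_c1a] /=.
  rewrite big_cons G01 // andbT big1_seq ?addn0 // => e /andP[_].
  rewrite mem_iota => /andP[e_gt0 lt_e]; rewrite G01 ?(gtn_eqF e_gt0) ?andbF //; lia.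
rewrite -addn1 iotaD big_cat /= big_seq1 add0n eqxx big1_seq // => c1 /andP[_].
by rewrite mem_iota => /andP[_ lt_c1a]; rewrite ltn_eqF.
Qed.

Lemma canon_even3_term_eq a b c c1 e :
  canon [:: a; b; c] = [:: a; b; c] -> c1 <= a -> e <= c ->
  (canon [:: c1; a - c1 + b + e; c - e] == [:: a; b; c]) = (c1 == a) && (e == 0).
Proof.
move=> canon_abc le_c1a le_ec.
apply/eqP/andP => [canon_eq|[/eqP-> /eqP->]]; last first.
  by rewrite subnn add0n addn0 subn0 canon_abc.
case: (canon3_cases c1 (a - c1 + b + e) (c - e)); rewrite canon_eq //= => -[_ mid].
by split; apply/eqP; lia.
Qed.

Lemma coef_diag_ge4 beta : 4 <= size beta -> canon beta = beta -> coef beta beta = 0.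
Proof.
move=> ge4_beta canon_beta; apply/eqP; apply: contraT => /coef_neq0[t beta_t].
rewrite canon_beta => t_beta.
by have := size_child_lt ge4_beta beta_t; rewrite t_beta ltnn.
Qed.

Lemma coef_diag3 a b c : canon [:: a; b; c] = [:: a; b; c] ->
  coef [:: a; b; c] [:: a; b; c] = 1.
Proof.
move=> canon_abc; rewrite coef_sum canon_abc /all_terms big_cat /=.
rewrite [X in _ + X]big1_seq ?addn0 => [|t /andP[_ odd_t]]; last first.
  case: eqP => // t_abc.
  by have := size_odd_child3 (erefl : size [:: a; b; c] = 3) odd_t; rewrite t_abc.
rewrite terms_of_even3 sum_mulp big_map.
under eq_bigr => c1 _ do rewrite sum_mulp big_seq1 sum_mulp big_map.
under eq_bigr => c1 _ do under eq_bigr => e _ do rewrite big_seq1 /=.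
apply: sum_iota_indicator2 => c1 e le_c1a le_ec.
have -> : [:: c1 + 0 + (0 + (0 + 0)); a - c1 + (b + (e + 0)); c - e] =
          [:: c1; a - c1 + b + e; c - e] by congr [:: _; _; _]; lia.
rewrite canon_even3_term_eq //.
by case: (c1 =P a) => [->|]; case: (e =P 0) => [->|] //=; rewrite binn bin0.
Qed.

Definition Dclass alpha (i : 'I_(dimD alpha).+1) : seq nat := nth [::] (Dlist alpha) i.

Lemma mem_canon_Dlist alpha : canon alpha \in Dlist alpha.
Proof. by apply: (@closure_iter_mono _ 0); rewrite ?mem_head. Qed.

Lemma size_Dlist alpha : size (Dlist alpha) = (dimD alpha).+1.
Proof.
rewrite /dimD prednK // lt0n size_eq0.
by apply: contraTneq (mem_canon_Dlist alpha) => ->.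
Qed.

Lemma uniq_Dlist alpha : uniq (Dlist alpha).
Proof. exact: closure_iter_uniq. Qed.

Lemma mem_Dclass {alpha} i : Dclass alpha i \in Dlist alpha.
Proof. by rewrite mem_nth // size_Dlist. Qed.

Lemma Dclass_inj {alpha} : injective (Dclass alpha).
Proof.
move=> i j /eqP; rewrite /Dclass nth_uniq ?size_Dlist ?uniq_Dlist //.
by move/eqP/val_inj.
Qed.

Lemma AmxE alpha i j : Amx alpha i j = (coef (Dclass alpha i) (Dclass alpha j))%:R%R.
Proof. by rewrite mxE. Qed.

Lemma mem_Dlist {alpha beta} :
  beta \in Dlist alpha -> canon beta = beta /\ sumn beta = sumn alpha.
Proof.
move: beta; apply: (@closure_iter_ind (fun beta =>
  canon beta = beta /\ sumn beta = sumn alpha)) => [_ /[1!inE]/eqP->|].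
  by rewrite canon_idem sumn_canon.
move=> _ _ [_ <-] /childrenP[t /mem_all_terms[_ <-] ->].
by rewrite canon_idem sumn_canon.
Qed.

Lemma mem_Dlist_singleton {r beta} :
  r != 0 -> beta \in Dlist [:: r] -> size beta <= 2.
Proof.
move=> r_neq0; move: beta; apply: (@closure_iter_ind (fun beta =>
  size beta <= 2)) => [_ /[1!inE]/eqP->|beta _ le2 /childrenP[t + ->]].
  by rewrite canon_singleton.
exact: size_child_le2.
Qed.

Lemma addn2_leq_exp2 k : 2 <= k -> k + 2 <= 2 ^ k.
Proof.
elim: k => [|k IHk] //; rewrite ltnS leq_eqVlt => /orP[/eqP<- //|/IHk].
by rewrite expnS; lia.
Qed.

Lemma leq_size_fuel {alpha} : 0 < sumn alpha -> (size alpha).+2 <= fuel alpha.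
Proof.
move=> sum_gt0; rewrite /fuel; set k := maxn (size alpha) 3.
apply: (@leq_trans (k + 2)); first lia.
apply: leq_trans (addn2_leq_exp2 k _) _; first lia.
by rewrite leq_exp2r; lia.
Qed.

Section ReachableClasses.
Variable alpha : seq nat.
Hypothesis alpha_head : 0 < nth 0 alpha 0.
Hypothesis alpha_last : 0 < nth 0 alpha (size alpha).-1.
Let r := sumn alpha.

Lemma sumn_alpha_gt0 : 0 < r.
Proof. by move: alpha_head; rewrite /r; case: alpha => //= x s /ltn_addr->. Qed.

Lemma size_canon_alpha : size (canon alpha) = size alpha.
Proof.
rewrite size_canon strip_id //; move: alpha_head alpha_last.
by case: alpha => [|x s] //= x_gt0 last_gt0; rewrite /stripped /= -!lt0n x_gt0.
Qed.

Lemma singleton_mem_iter :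
  [:: r] \in iter (size alpha).+1 closure_step [:: canon alpha].
Proof.
have := @singleton_reachable _ _ sumn_alpha_gt0 (size alpha) 0 _ (mem_head _ _).
by rewrite add0n; apply; rewrite ?sumn_canon ?size_canon_alpha ?leqW.
Qed.

Lemma singleton_or_child_mem_Dlists beta : beta = [:: r] \/ beta \in children [:: r] ->
  (beta \in Dlist alpha) && (beta \in Dlist [:: r]).
Proof.
have r_neq0 : r != 0 by rewrite -lt0n sumn_alpha_gt0.
have r_in : [:: r] \in iter 0 closure_step [:: canon [:: r]].
  by rewrite /= canon_singleton ?mem_head.
move=> beta_r; apply/andP; split.
  rewrite /Dlist; apply: (closure_iter_mono (leq_size_fuel sumn_alpha_gt0)).
  case: beta_r => [->|]; first exact/closure_step_sub/singleton_mem_iter.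
  exact: closure_step_child singleton_mem_iter.
rewrite /Dlist; apply: (@closure_iter_mono _ 1); first by rewrite /fuel expn_gt0.
case: beta_r => [->|]; first exact: closure_step_sub.
exact: closure_step_child r_in.
Qed.

Lemma small_mem_Dlists {beta} : canon beta = beta -> sumn beta = r ->
  size beta <= 2 -> (beta \in Dlist alpha) && (beta \in Dlist [:: r]).
Proof.
move=> canon_beta sum_beta le2; apply: singleton_or_child_mem_Dlists.
rewrite -sum_beta; apply: small_canon_child_singleton => //.
by rewrite sum_beta sumn_alpha_gt0.
Qed.

Lemma mem_Dlist_small beta :
  (beta \in Dlist [:: r]) = (beta \in Dlist alpha) && (size beta <= 2).
Proof.
have r_neq0 : r != 0 by rewrite -lt0n sumn_alpha_gt0.
apply/idP/andP => [D_beta|[D_beta le2]].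
  have [canon_beta /= sum_beta] := mem_Dlist D_beta; rewrite addn0 in sum_beta.
  have le2 := mem_Dlist_singleton r_neq0 D_beta.
  by case/andP: (small_mem_Dlists canon_beta sum_beta le2).
have [canon_beta sum_beta] := mem_Dlist D_beta.
by case/andP: (small_mem_Dlists canon_beta sum_beta le2).
Qed.

Definition emb (i : 'I_(dimD [:: r]).+1) : 'I_(dimD alpha).+1 :=
  inord (index (Dclass [:: r] i) (Dlist alpha)).

Definition small_index (j : 'I_(dimD alpha).+1) := size (Dclass alpha j) <= 2.

Definition height_index (j : 'I_(dimD alpha).+1) := height r (Dclass alpha j).

Lemma Dclass_emb i : Dclass alpha (emb i) = Dclass [:: r] i.
Proof.
have := mem_Dclass i; rewrite mem_Dlist_small => /andP[D_i _].
by rewrite /Dclass /emb inordK ?nth_index // -size_Dlist index_mem.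
Qed.

Lemma emb_inj : injective emb.
Proof. by move=> i j /(congr1 (Dclass alpha)); rewrite !Dclass_emb => /Dclass_inj. Qed.

Lemma small_emb i : small_index (emb i).
Proof.
rewrite /small_index Dclass_emb.
by have := mem_Dclass i; rewrite mem_Dlist_small => /andP[].
Qed.

Lemma emb_onto j : small_index j -> exists i, emb i = j.
Proof.
move=> small_j; have D_j : Dclass alpha j \in Dlist [:: r].
  by rewrite mem_Dlist_small mem_Dclass.
have := D_j; rewrite -index_mem size_Dlist => lt_j.
by exists (Ordinal lt_j); apply: Dclass_inj; rewrite Dclass_emb /Dclass /= nth_index.
Qed.

Lemma Amx_emb i j : Amx alpha (emb i) (emb j) = Amx [:: r] i j.
Proof. by rewrite !AmxE !Dclass_emb. Qed.

Lemma Amx_stable i j : small_index i -> Amx alpha i j != 0%R -> small_index j.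
Proof.
rewrite /small_index AmxE Num.Theory.pnatr_eq0 => small_i /coef_neq0[t i_t].
have [canon_j _] := mem_Dlist (mem_Dclass j).
by rewrite canon_j => <-; apply: size_child_le2 small_i i_t.
Qed.

Lemma Amx_lower i j : ~~ small_index i -> ~~ small_index j ->
  Amx alpha i j != 0%R -> height_index j < height_index i \/ j = i.
Proof.
rewrite /small_index /height_index AmxE Num.Theory.pnatr_eq0 -!ltnNge.
move=> big_i big_j coef_ij.
have [canon_i _] := mem_Dlist (mem_Dclass i).
have [canon_j sum_j] := mem_Dlist (mem_Dclass j).
have [lt_ji|/Dclass_inj] := coef_neq0_height canon_i canon_j sum_j big_i big_j coef_ij.
  by left.
by right.
Qed.

Lemma Amx_diag01 i : ~~ small_index i -> Amx alpha i i = 0%R \/ Amx alpha i i = 1%R.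
Proof.
rewrite /small_index AmxE -ltnNge => big_i.
have [canon_i _] := mem_Dlist (mem_Dclass i).
have [ge4|lt4] := leqP 4 (size (Dclass alpha i)); first by left; rewrite coef_diag_ge4.
have /size3P[a [b [c def_i]]] : size (Dclass alpha i) = 3 by lia.
by right; rewrite def_i coef_diag3 // -def_i.
Qed.

End ReachableClasses.

Local Open Scope ring_scope.

Theorem theorem2p2 (alpha : seq nat) :
  (0 < nth 0 alpha 0)%N -> (0 < nth 0 alpha (size alpha).-1)%N ->
  exists w z : nat,
    mmp alpha = 'X^w * ('X - 1) ^+ z * mmp [:: sumn alpha].
Proof.
move=> alpha_head alpha_last.
apply: (@mxminpoly_ext _ _ _ _ _ (emb alpha) (small_index alpha) (height_index alpha)).
- by apply: emb_inj.
- by apply: small_emb.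
- by apply: emb_onto.
- by apply: Amx_emb.
- by apply: Amx_stable.
- by apply: Amx_lower.
- by apply: Amx_diag01.
Qed.
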